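(* For filters $\Xi,\Upsilon\in P_{III*}$, one has $\mathcal C_{\Xi\text{-unc}}=\mathcal C_{\Upsilon\text{-unc}}$ if and only if all four of the following inclusions hold: $(\wedge\Xi)\cap(\vee\overline\Upsilon)\subseteq\vee\overline\Xi$, $\quad\wedge\Xi\subseteq(\vee\overline\Xi)\cup(\wedge\Upsilon)$, $(\wedge\Upsilon)\cap(\vee\overline\Xi)\subseteq\vee\overline\Upsilon$, $\quad\wedge\Upsilon\subseteq(\vee\overline\Upsilon)\cup(\wedge\Xi)$.
   Context: Let $n\ge1$, $L=\{1,\dots,n\}$, and for $i\in L$ let $\mathcal H_i$ be a Hilbert space with $1<\dim\mathcal H_i<\infty$; $\mathcal H_X=\bigotimes_{i\in X}\mathcal H_i$ and $\mathcal D_X$ is the set of density operators on $\mathcal H_X$. $P_I$ is the set of partitions of $L$ ordered by refinement ($\upsilon\preceq\xi$ iff every part of $\upsilon$ lies in a part of $\xi$). For $\xi\in P_I$, $\mathcal D_{\xi\text{-unc}}=\{\varrho\in\mathcal D_L:\varrho=\bigotimes_{X\in\xi}\varrho_X,\ \varrho_X\in\mathcal D_X\}$, and for a set $S\subseteq P_I$, $\mathcal D_{S\text{-unc}}=\bigcup_{\xi\in S}\mathcal D_{\xi\text{-unc}}$. $P_{II}$ is the set of nonempty down-sets of $P_I$, ordered by inclusion. $P_{II*}\subseteq P_{II}$ is a fixed nonempty subset, and $P_{III*}$ is the set of nonempty up-sets of $P_{II*}$. For $\Xi\in P_{III*}$: $\overline\Xi=P_{II*}\setminus\Xi$, $\wedge\Xi=\bigcap_{\boldsymbol\xi\in\Xi}\boldsymbol\xi$,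 $\vee\overline\Xi=\bigcup_{\boldsymbol\xi'\in\overline\Xi}\boldsymbol\xi'$ (equal to $\emptyset$ if $\overline\Xi=\emptyset$), and $\mathcal C_{\Xi\text{-unc}}=\bigcap_{\boldsymbol\xi'\in\overline\Xi}(\mathcal D_L\setminus\mathcal D_{\boldsymbol\xi'\text{-unc}})\cap\bigcap_{\boldsymbol\xi\in\Xi}\mathcal D_{\boldsymbol\xi\text{-unc}}$. *)

From HB Require Import structures.
From mathcomp Require Import all_boot all_order all_algebra.
Set Implicit Arguments. Unset Strict Implicit. Unset Printing Implicit Defensive.
Import Order.TTheory GRing.Theory Num.Theory.
Local Open Scope ring_scope.

(* Sites L = 'I_n; site i carries the Hilbert space C^(d i) (a chosen
   orthonormal basis indexed by 'I_(d i)). *)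

(* Basis index of H_X = (x)_{i in X} H_i : configurations on X. *)
Definition cfg (n : nat) (d : 'I_n -> nat) (X : {set 'I_n}) : finType :=
  {dffun forall i : {i : 'I_n | i \in X}, 'I_(d (val i))}.

(* Basis index of H_L. *)
Definition cfgL (n : nat) (d : 'I_n -> nat) : finType :=
  {dffun forall i : 'I_n, 'I_(d i)}.

Definition res (n : nat) (d : 'I_n -> nat) (X : {set 'I_n}) (a : cfgL d) : cfg d X :=
  [ffun i : {i : 'I_n | i \in X} => a (val i)].

(* Density operator on C^I, given by its matrix in the basis indexed by I:
   self-adjoint, positive semidefinite, trace one. *)
Definition is_density (C : numClosedFieldType) (I : finType) (r : I -> I -> C) : Prop :=
  (forall a b, r b a = (r a b)^*) /\
  (forall v : I -> C, 0 <= \sum_a \sum_b (v a)^* * r a b * v b) /\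
  \sum_a r a a = 1.

(* rho is xi-uncorrelated: rho = (x)_{X in xi} rho_X with rho_X in D_X *)
Definition unc (C : numClosedFieldType) (n : nat) (d : 'I_n -> nat)
  (xi : {set {set 'I_n}}) (rho : cfgL d -> cfgL d -> C) : Prop :=
  is_density rho /\
  exists f : forall X : {set 'I_n}, cfg d X -> cfg d X -> C,
    (forall X, X \in xi -> is_density (f X)) /\
    forall a b, rho a b = \prod_(X in xi) f X (res X a) (res X b).

Definition uncS (C : numClosedFieldType) (n : nat) (d : 'I_n -> nat)
  (S : {set {set {set 'I_n}}}) (rho : cfgL d -> cfgL d -> C) : Prop :=
  exists2 xi, xi \in S & unc xi rho.

Definition is_partition (n : nat) (P : {set {set 'I_n}}) : bool :=
  partition P [set: 'I_n].

Definition refines (n : nat) (ups xi : {set {set 'I_n}}) : bool :=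
  [forall X in ups, [exists Y in xi, X \subset Y]].

Definition is_downset (n : nat) (S : {set {set {set 'I_n}}}) : bool :=
  [&& [forall x in S, is_partition x], S != set0 &
      [forall x in S, forall y, (is_partition y && refines y x) ==> (y \in S)]].

Definition is_PIIstar (n : nat) (Q : {set {set {set {set 'I_n}}}}) : bool :=
  (Q != set0) && [forall S in Q, is_downset S].

Definition is_filter (n : nat) (Q Xi : {set {set {set {set 'I_n}}}}) : bool :=
  [&& Xi \subset Q, Xi != set0 &
      [forall x in Xi, forall y in Q, (x \subset y) ==> (y \in Xi)]].

Definition wedgeF (n : nat) (Xi : {set {set {set {set 'I_n}}}}) : {set {set {set 'I_n}}} :=
  \bigcap_(S in Xi) S.

(* vee of the complement of Xi in Q (empty if the complement is empty) *)
Definition veeCompl (n : nat) (Q Xi : {set {set {set {set 'I_n}}}}) : {set {set {set 'I_n}}} :=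
  \bigcup_(S in Q :\: Xi) S.

Definition Cunc (C : numClosedFieldType) (n : nat) (d : 'I_n -> nat)
  (Q Xi : {set {set {set {set 'I_n}}}}) (rho : cfgL d -> cfgL d -> C) : Prop :=
  is_density rho /\
  (forall S, S \in Q :\: Xi -> ~ uncS S rho) /\
  (forall S, S \in Xi -> uncS S rho).

(* The sets of sites S over which a density operator rho splits as a tensor product of an
   operator on S and one on its complement are closed under complement and intersection;
   their atoms therefore form a finest partition xi(rho) for which rho is uncorrelated,
   and rho is eta-uncorrelated exactly when xi(rho) refines eta.  As the members of
   P_II* are down-sets, rho lies in C_{Xi-unc} iff xi(rho) lies in
   (wedge Xi) minus (vee of the complement of Xi).  Every partition xi is xi(rho) for some
   rho, namely a product of GHZ states over the blocks of xi, so C_{Xi-unc} is contained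
   in C_{Ups-unc} iff the corresponding set difference for Xi is contained in that for
   Ups, and this inclusion unfolds into two of the four stated inclusions. *)

From HB Require Import structures.
From mathcomp Require Import all_boot all_order all_algebra.
From mathcomp Require Import ring.
Import Order.TTheory GRing.Theory Num.Theory.
Set Implicit Arguments. Unset Strict Implicit. Unset Printing Implicit Defensive.
Local Open Scope ring_scope.

Lemma disjoint_bigcup_cons (T : finType) (X : {set T}) (r : seq {set T}) :
  X \notin r -> {in X :: r &, forall A B : {set T}, A != B -> [disjoint A & B]} ->
  [disjoint X & \bigcup_(Y <- r) Y].
Proof.
move=> Xr Hdisj; rewrite bigcup_seq; apply: bigcup_disjoint => Y HY.
apply: Hdisj; rewrite ?inE ?eqxx ?HY ?orbT //.
by apply: contraNneq Xr => ->.
Qed.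

Lemma density_rank_one (C : numClosedFieldType) (I : finType) (rho : I -> I -> C)
    (w : I -> C) (k : C) :
  (forall x y, rho x y = w x * w y * k) -> (forall x, (w x)^* = w x) -> 0 <= k ->
  \sum_x rho x x = 1 -> is_density rho.
Proof.
move=> rhoE wreal k_ge0 tr1; split; [|split] => // [x y|v].
  by rewrite !rhoE !rmorphM /= !wreal conj_Creal ?ger0_real // [w x * _]mulrC.
set s := \sum_y w y * v y.
have -> : \sum_x \sum_y (v x)^* * rho x y * v y = k * (s^* * s).
  rewrite /s rmorph_sum big_distrlr /= mulr_sumr; apply: eq_bigr => x _.
  rewrite mulr_sumr; apply: eq_bigr => y _; rewrite rhoE rmorphM /= wreal; ring.
by rewrite mulr_ge0 // mulrC mul_conjC_ge0.
Qed.

Section States.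
Variable C : numClosedFieldType.
Variables (n : nat) (d : 'I_n -> nat).
Hypothesis hd : forall i, (1 < d i)%N.

Implicit Types (S T X Y A B : {set 'I_n}) (P xi eta : {set {set 'I_n}}) (a b c : cfgL d).

Definition cfg0 : cfgL d := [ffun i => Ordinal (ltnW (hd i))].
Definition cfg1 : cfgL d := [ffun i => Ordinal (hd i)].

Definition glue S a b : cfgL d := [ffun i => if i \in S then a i else b i].

Definition eq_off S c a := [forall i, (i \notin S) ==> (a i == c i)].
Definition zero_off S := eq_off S cfg0.

Definition agree S a b := forall i, i \in S -> a i = b i.

Lemma glueE S a b i : glue S a b i = if i \in S then a i else b i.
Proof. by rewrite ffunE. Qed.

Lemma eq_offP S c a : reflect (forall i, i \notin S -> a i = c i) (eq_off S c a).
Proof.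
apply: (iffP forallP) => H i; last by apply/implyP => /H ->.
by move=> Hi; move: (H i); rewrite Hi => /eqP.
Qed.

Lemma zero_offT a : zero_off setT a.
Proof. by apply/eq_offP => i; rewrite inE. Qed.

Lemma zero_off0 c : zero_off set0 c = (c == cfg0).
Proof.
apply/eq_offP/eqP => [H|-> //]; apply/ffunP => i; apply: H; by rewrite inE.
Qed.

Lemma glue_agree S a a' b : agree S a a' -> glue S a b = glue S a' b.
Proof. by move=> H; apply/ffunP => i; rewrite !glueE; case: ifP => // /H. Qed.

Lemma agree_glue_l S a b : agree S (glue S a b) a.
Proof. by move=> i Hi; rewrite glueE Hi. Qed.

Lemma agree_glue_r S a b : agree (~: S) (glue S a b) b.
Proof. by move=> i; rewrite inE glueE => /negbTE ->. Qed.

Lemma eq_off_glue S a c : eq_off S c (glue S a c).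
Proof. by apply/eq_offP => i Hi; rewrite glueE (negbTE Hi). Qed.

Lemma sum_zero_offU A B (F : cfgL d -> C) : [disjoint A & B] ->
  \sum_(c | zero_off (A :|: B) c) F c =
  \sum_(a | zero_off A a) \sum_(b | zero_off B b) F (glue A a b).
Proof.
move=> AB.
rewrite (partition_big (fun c => glue A c cfg0) (zero_off A)) => [|c _]; last first.
  exact: eq_off_glue.
apply: eq_bigr => a /eq_offP Ea.
rewrite (reindex_onto (glue A a) (fun c => glue B c cfg0)); last first.
  move=> c /andP[/eq_offP Ec /eqP Hc]; apply/ffunP => i; rewrite !glueE.
  case: ifP => HA; first by rewrite -Hc glueE HA.
  by case: ifP => HB //; rewrite Ec // inE HA HB.
apply: eq_bigl => b; apply/idP/idP.
  by move=> /andP[_ /eqP <-]; apply: eq_off_glue.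
move/eq_offP => Eb; apply/andP; split; first (apply/andP; split).
- apply/eq_offP => i; rewrite inE negb_or => /andP[HA HB].
  by rewrite glueE (negbTE HA) Eb.
- apply/eqP/ffunP => i; rewrite !glueE.
  by case HA: (i \in A) => //; rewrite Ea ?HA.
- apply/eqP/ffunP => i; rewrite !glueE.
  case HA: (i \in A); case HB: (i \in B) => //; first by rewrite (disjointFr AB HA) in HB.
  all: by rewrite Eb ?HB.
Qed.

Definition ext0_fun X (al : cfg d X) (i : 'I_n) : 'I_(d i) :=
  (if i \in X as b return (i \in X) = b -> 'I_(d i)
   then fun Hi => al (exist _ i Hi) else fun _ => cfg0 i) erefl.
Definition ext0 X (al : cfg d X) : cfgL d := finfun (ext0_fun al).

Lemma ext0E_in X (al : cfg d X) i (Hi : i \in X) : ext0 al i = al (exist _ i Hi).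
Proof.
rewrite ffunE /ext0_fun; move: (erefl (i \in X)); rewrite {2 3}Hi => Hi'.
by rewrite (bool_irrelevance Hi' Hi).
Qed.

Lemma res_agree X a b : agree X a b -> res X a = res X b.
Proof. by move=> H; apply/ffunP => -[i Hi]; rewrite !ffunE /= H. Qed.

Lemma res_ext0 X (al : cfg d X) : res X (ext0 al) = al.
Proof. by apply/ffunP => -[i Hi]; rewrite ffunE /= (ext0E_in al Hi). Qed.

Lemma ext0_res_in X a i : i \in X -> ext0 (res X a) i = a i.
Proof. by move=> Hi; rewrite (ext0E_in _ Hi) ffunE. Qed.

Lemma res_glue_ext0 X (al : cfg d X) c : res X (glue X (ext0 al) c) = al.
Proof. by rewrite -[RHS]res_ext0; apply: res_agree => i Hi; rewrite glueE Hi. Qed.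

Lemma sum_eq_off X c (g : cfgL d -> C) :
  \sum_(a | eq_off X c a) g a = \sum_(al : cfg d X) g (glue X (ext0 al) c).
Proof.
rewrite (reindex_onto (fun al => glue X (ext0 al) c) (res X)); last first.
  move=> a /eq_offP Ha; apply/ffunP => i; rewrite glueE.
  by case: ifP => Hi; [rewrite ext0_res_in | rewrite Ha ?Hi].
by apply: eq_bigl => al; rewrite res_glue_ext0 eqxx andbT eq_off_glue.
Qed.

Lemma sum_zero_off_res X (g : cfg d X -> C) :
  \sum_(a | zero_off X a) g (res X a) = \sum_(al : cfg d X) g al.
Proof. by rewrite /zero_off sum_eq_off; apply: eq_bigr => al _; rewrite res_glue_ext0. Qed.

Section PartialTrace.
Variable rho : cfgL d -> cfgL d -> C.

Definition trace := \sum_c rho c c.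

(* The reduced density operator of rho on the sites S (partial trace over ~: S),
   seen as a function of the S-parts of its two arguments. *)
Definition ptr S a b :=
  \sum_(c | zero_off (~: S) c) rho (glue S a c) (glue S b c).

Lemma ptr_agree S a a' b b' : agree S a a' -> agree S b b' -> ptr S a b = ptr S a' b'.
Proof.
by move=> Ha Hb; apply: eq_bigr => c _; rewrite (glue_agree _ Ha) (glue_agree _ Hb).
Qed.

Lemma ptrT a b : ptr setT a b = rho a b.
Proof.
rewrite /ptr setCT (big_pred1 cfg0) => [|c]; last exact: zero_off0.
by congr rho; apply/ffunP => i; rewrite glueE inE.
Qed.

Lemma ptr0 a b : ptr set0 a b = trace.
Proof.
rewrite /ptr setC0; apply: eq_big => [c|c _]; first exact: zero_offT.
by congr rho; apply/ffunP => i; rewrite glueE inE.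
Qed.

Lemma sum_ptr_glue S A a b :
  \sum_(c | zero_off (S :\: A) c) ptr S (glue A a c) (glue A b c) = ptr (A :&: S) a b.
Proof.
rewrite /ptr; have -> : ~: (A :&: S) = (S :\: A) :|: ~: S.
  by apply/setP => i; rewrite !inE; case: (i \in A); case: (i \in S).
rewrite sum_zero_offU; last by rewrite disjoints_subset setCK subsetDl.
apply: eq_bigr => c _; apply: eq_bigr => e _.
by congr rho; apply/ffunP => i; rewrite !glueE !inE; case: (i \in A); case: (i \in S).
Qed.

Definition splits S := forall a b, rho a b = ptr S a b * ptr (~: S) a b.

Lemma ptr_split S A a b : splits S -> ptr A a b = ptr (A :&: S) a b * ptr (A :\: S) a b.
Proof.
move=> HS.
rewrite setDE -(sum_ptr_glue S) -(sum_ptr_glue (~: S)) big_distrlr /=.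
rewrite {1}/ptr (eq_bigr _ (fun c _ => HS _ _)).
have -> : ~: A = (S :\: A) :|: (~: S :\: A).
  by apply/setP => i; rewrite !inE; case: (i \in A); case: (i \in S).
rewrite sum_zero_offU; last first.
  by rewrite -setI_eq0; apply/eqP/setP => i; rewrite !inE; case: (i \in A); case: (i \in S).
apply: eq_bigr => c1 _; apply: eq_bigr => c2 _.
by congr (_ * _); apply: ptr_agree => i; rewrite !glueE !inE;
  case: (i \in A) => //=; case: (i \in S).
Qed.

Lemma splitsC S : splits S -> splits (~: S).
Proof. by move=> H a b; rewrite setCK mulrC H. Qed.

Lemma splitsI S T : splits S -> splits T -> splits (S :&: T).
Proof.
move=> HS HT a b.
have [E1 E2 E3 E4 E5] : [/\ ~: (S :&: T) :&: S = S :\: T, ~: (S :&: T) :\: S = ~: S,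
    T :\: S = ~: S :&: T, ~: T :&: S = S :\: T & ~: T :\: S = ~: S :\: T].
  by split; apply/setP => i; rewrite !inE; case: (i \in S); case: (i \in T).
rewrite HT (ptr_split T a b HS) (ptr_split (~: T) a b HS).
rewrite (ptr_split (~: (S :&: T)) a b HS) E1 E2 (ptr_split (~: S) a b HT).
rewrite E3 E4 E5 setIC; ring.
Qed.

Lemma ptr_setU S T a b : splits S -> [disjoint S & T] ->
  ptr (S :|: T) a b = ptr S a b * ptr T a b.
Proof.
move=> HS ST; rewrite (ptr_split _ a b HS) setUK setDUl setDv set0U.
by rewrite (setDidPl _) // disjoint_sym.
Qed.

Lemma splits_diag_swap S a b : splits S ->
  rho a a * rho b b = rho (glue S a b) (glue S a b) * rho (glue S b a) (glue S b a).
Proof.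
move=> HS; rewrite !HS.
rewrite !(ptr_agree (agree_glue_l a b) (agree_glue_l a b)).
rewrite !(ptr_agree (agree_glue_l b a) (agree_glue_l b a)).
rewrite !(ptr_agree (agree_glue_r a b) (agree_glue_r a b)).
rewrite !(ptr_agree (agree_glue_r b a) (agree_glue_r b a)).
by ring.
Qed.

Hypothesis trace1 : trace = 1.

Lemma splitsT : splits setT.
Proof. by move=> a b; rewrite ptrT setCT ptr0 trace1 mulr1. Qed.

Lemma ptr_bigcup (r : seq {set 'I_n}) a b :
  uniq r -> {in r &, forall X Y : {set 'I_n}, X != Y -> [disjoint X & Y]} ->
  {in r, forall X, splits X} ->
  ptr (\bigcup_(X <- r) X) a b = \prod_(X <- r) ptr X a b.
Proof.
elim: r => [|X r IH] /=; first by rewrite !big_nil ptr0 trace1.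
move=> /andP[Xr ur] Hdisj Hs.
rewrite !big_cons ptr_setU ?IH ?disjoint_bigcup_cons //; last exact/Hs/mem_head.
- by apply: sub_in2 Hdisj => Y HY; rewrite inE HY orbT.
- by apply: sub_in1 Hs => Y HY; rewrite inE HY orbT.
Qed.

(* A factorization rho = F * G into a normalized operator F on Y and an operator G on
   ~: Y forces F and G to be the reduced operators. *)
Lemma splits_factor Y (F G : cfgL d -> cfgL d -> C) :
  (forall a b, rho a b = F a b * G a b) ->
  (forall a a' b b', agree Y a a' -> agree Y b b' -> F a b = F a' b') ->
  (forall a a' b b', agree (~: Y) a a' -> agree (~: Y) b b' -> G a b = G a' b') ->
  \sum_(c | zero_off Y c) F c c = 1 -> splits Y.
Proof.
move=> HFG HF HG trF.
set trG := \sum_(c | zero_off (~: Y) c) G c c.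
have ptrY a b : ptr Y a b = F a b * trG.
  rewrite /ptr mulr_sumr; apply: eq_bigr => c _; rewrite HFG.
  by congr (_ * _); [apply: HF | apply: HG]; exact: agree_glue_l || exact: agree_glue_r.
have ptrYC a b : ptr (~: Y) a b = G a b.
  rewrite /ptr setCK -[G a b]mul1r -trF mulr_suml; apply: eq_bigr => c _; rewrite HFG.
  by congr (_ * _); [apply: HF | apply: HG]; try exact: agree_glue_l;
    move=> i Hi; rewrite glueE inE Hi.
have trG1 : trG = 1.
  rewrite -trace1 /trace (eq_bigl (zero_off (Y :|: ~: Y))) => [|e]; last first.
    by rewrite setUCr zero_offT.
  rewrite sum_zero_offU -?subsets_disjoint // -[trG]mul1r -trF mulr_suml; apply: eq_bigr => c1 _.
  rewrite mulr_sumr; apply: eq_bigr => c2 _; rewrite HFG; symmetry.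
  by congr (_ * _); [apply: HF | apply: HG]; exact: agree_glue_l || exact: agree_glue_r.
by move=> a b; rewrite ptrY ptrYC trG1 mulr1 HFG.
Qed.

End PartialTrace.

Lemma is_partition_trivIset P : is_partition P -> trivIset P.
Proof. by case/and3P. Qed.

Lemma is_partition_cover P : is_partition P -> cover P = setT.
Proof. by case/and3P => /eqP. Qed.

Lemma is_partition_block_neq0 P X : is_partition P -> X \in P -> X != set0.
Proof. by case/and3P => _ _ P0 HX; apply: contraNneq P0 => <-. Qed.

Definition reduced (rho : cfgL d -> cfgL d -> C) X (al be : cfg d X) :=
  ptr rho X (ext0 al) (ext0 be).

Lemma ptr_res (rho : cfgL d -> cfgL d -> C) X a b :
  ptr rho X a b = reduced rho (res X a) (res X b).
Proof. by apply: ptr_agree => i Hi; rewrite ext0_res_in. Qed.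

Lemma reduced_density (rho : cfgL d -> cfgL d -> C) X :
  is_density rho -> is_density (reduced rho (X := X)).
Proof.
move=> [Hherm [Hpsd Htr]]; split; [|split].
- by move=> al be; rewrite /reduced /ptr rmorph_sum; apply: eq_bigr => c _.
- move=> v.
  have -> : \sum_al \sum_be (v al)^* * reduced rho al be * v be =
      \sum_(c | zero_off (~: X) c) \sum_al \sum_be
        (v al)^* * rho (glue X (ext0 al) c) (glue X (ext0 be) c) * v be.
    rewrite [RHS]exchange_big; apply: eq_bigr => al _; rewrite [RHS]exchange_big.
    by apply: eq_bigr => be _; rewrite /reduced /ptr mulr_sumr mulr_suml.
  apply: sumr_ge0 => c _.
  pose u a := if eq_off X c a then v (res X a) else 0.
  have := Hpsd u; congr (0 <= _).
  rewrite [LHS](bigID (eq_off X c)) /= [X in _ + X]big1 ?addr0 => [|a /negbTE Ha]; last first.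
    by rewrite big1 // => b _; rewrite /u Ha rmorph0 !mul0r.
  rewrite sum_eq_off; apply: eq_bigr => al _.
  rewrite (bigID (eq_off X c)) /= [X in _ + X]big1 ?addr0 => [|b /negbTE Hb]; last first.
    by rewrite /u Hb mulr0.
  rewrite sum_eq_off; apply: eq_bigr => be _.
  by rewrite /u !res_glue_ext0 !eq_off_glue.
- rewrite -(sum_zero_off_res (fun al => reduced rho al al)).
  under eq_bigr => a _ do rewrite -ptr_res.
  rewrite /ptr -(sum_zero_offU (fun c => rho c c)) -?subsets_disjoint //.
  by rewrite -Htr; apply: eq_bigl => c; rewrite setUCr zero_offT.
Qed.

Lemma unc_of_ptr_prod (rho : cfgL d -> cfgL d -> C) xi : is_density rho ->
  (forall a b, rho a b = \prod_(X in xi) ptr rho X a b) -> unc xi rho.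
Proof.
move=> Hrho Hprod; split => //; exists (reduced rho); split => [X _|a b].
  exact: reduced_density.
by rewrite Hprod; apply: eq_bigr => X _; rewrite ptr_res.
Qed.

Lemma splits_of_unc (rho : cfgL d -> cfgL d -> C) eta Y :
  is_partition eta -> unc eta rho -> Y \in eta -> splits rho Y.
Proof.
move=> Heta [[_ [_ Htr]] [f [Hf Hrho]]] HY.
apply: (splits_factor Htr (F := fun a b => f Y (res Y a) (res Y b))
  (G := fun a b => \prod_(X in eta | X != Y) f X (res X a) (res X b))).
- by move=> a b; rewrite Hrho (bigD1 Y).
- by move=> a a' b b' Ha Hb; rewrite (res_agree Ha) (res_agree Hb).
- move=> a a' b b' Ha Hb; apply: eq_bigr => X /andP[HX XY].
  have XYdisj := trivIsetP (is_partition_trivIset Heta) _ _ HX HY XY.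
  have agreeX a1 a2 : agree (~: Y) a1 a2 -> agree X a1 a2.
    by move=> H i Hi; apply: H; rewrite inE (disjointFr XYdisj Hi).
  by rewrite (res_agree (agreeX _ _ Ha)) (res_agree (agreeX _ _ Hb)).
- by rewrite (sum_zero_off_res (fun al => f Y al al)); case: (Hf Y HY) => _ [].
Qed.

Section FinestPartition.
Variable rho : cfgL d -> cfgL d -> C.
Hypothesis rho_density : is_density rho.

Let trace1 : trace rho = 1. Proof. by case: rho_density => _ []. Qed.

Definition splitsb S := [forall a, forall b, rho a b == ptr rho S a b * ptr rho (~: S) a b].

Lemma splitsP S : reflect (splits rho S) (splitsb S).
Proof.
apply: (iffP forallP) => H a; last by apply/forallP => b; apply/eqP/H.
by move=> b; apply/eqP; move/forallP: (H a).
Qed.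

Definition atom i := \bigcap_(S | splitsb S && (i \in S)) S.

Lemma splits_atom i : splits rho (atom i).
Proof.
apply: (big_ind (splits rho)); first exact: splitsT.
  exact: splitsI.
by move=> S /andP[/splitsP].
Qed.

Lemma mem_atom i : i \in atom i.
Proof. by apply/bigcapP => S /andP[]. Qed.

Lemma atom_min i S : splits rho S -> i \in S -> atom i \subset S.
Proof. by move=> HS Hi; apply: bigcap_inf; rewrite Hi andbT; apply/splitsP. Qed.

Lemma atom_sym i j : j \in atom i -> atom i = atom j.
Proof.
move=> Hj; have sji : atom j \subset atom i by apply: atom_min => //; apply: splits_atom.
apply/eqP; rewrite eqEsubset sji andbT; apply: atom_min; first exact: splits_atom.
apply: contraT => Hi.
have : atom i \subset atom i :&: ~: atom j.
  apply: atom_min; last by rewrite !inE mem_atom Hi.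
  exact: splitsI (splits_atom i) (splitsC (splits_atom j)).
by move/subsetP/(_ j Hj); rewrite !inE mem_atom andbF.
Qed.

Definition atoms := equivalence_partition (fun i j => j \in atom i) setT.

Lemma atoms_partition : is_partition atoms.
Proof.
apply: equivalence_partitionP => i j k _ _ _; split; first exact: mem_atom.
by move=> /atom_sym ->.
Qed.

Lemma atomsP X : X \in atoms -> exists i, X = atom i.
Proof. by case/imsetP => i _ ->; exists i; apply/setP => j; rewrite !inE. Qed.

Lemma unc_atoms : unc atoms rho.
Proof.
apply: unc_of_ptr_prod => // a b.
have /trivIsetP Hdisj := is_partition_trivIset atoms_partition.
rewrite -ptrT -(is_partition_cover atoms_partition) /cover -!big_enum /=.
rewrite ptr_bigcup ?enum_uniq //.
- by move=> X Y; rewrite !mem_enum; apply: Hdisj.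
- by move=> X; rewrite mem_enum => /atomsP [i ->]; apply: splits_atom.
Qed.

Lemma atoms_refines eta : is_partition eta -> unc eta rho -> refines atoms eta.
Proof.
move=> Heta Hunc; apply/forallP => X; apply/implyP => /atomsP [i ->].
have Hi : i \in cover eta by rewrite is_partition_cover.
apply/existsP; exists (pblock eta i); rewrite pblock_mem //=.
apply: atom_min; last by rewrite mem_pblock.
by apply: splits_of_unc Heta Hunc _; rewrite pblock_mem.
Qed.

End FinestPartition.

Lemma cfg0_neq1 i : cfg0 i != cfg1 i.
Proof. by rewrite !ffunE. Qed.

Lemma agree_res X a b : res X a = res X b -> agree X a b.
Proof. by move=> /ffunP Hab i Hi; move: (Hab (exist _ i Hi)); rewrite !ffunE. Qed.

Lemma sum_zero_off_prod (r : seq {set 'I_n}) (g : {set 'I_n} -> cfgL d -> C) :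
  uniq r -> {in r &, forall X Y : {set 'I_n}, X != Y -> [disjoint X & Y]} ->
  (forall X a b, agree X a b -> g X a = g X b) ->
  \sum_(c | zero_off (\bigcup_(X <- r) X) c) \prod_(X <- r) g X c =
  \prod_(X <- r) \sum_(c | zero_off X c) g X c.
Proof.
move=> + + Hg; elim: r => [|X r IH] /=.
  by move=> _ _; rewrite !big_nil (big_pred1 cfg0) ?big_nil // => c; apply: zero_off0.
move=> /andP[Xr ur] Hdisj.
have XU := disjoint_bigcup_cons Xr Hdisj.
rewrite !big_cons sum_zero_offU // -IH //; last first.
  by apply: sub_in2 Hdisj => Y HY; rewrite inE HY orbT.
rewrite big_distrlr /=; apply: eq_bigr => c1 _; apply: eq_bigr => c2 _.
rewrite big_cons; congr (_ * _); first exact/Hg/agree_glue_l.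
rewrite big_seq [RHS]big_seq; apply: eq_bigr => Y HY; apply: Hg => i Hi.
have HiU : i \in \bigcup_(Z <- r) Z by rewrite bigcup_seq; apply/bigcupP; exists Y.
by rewrite glueE (disjointFl XU HiU).
Qed.

(* The GHZ state (|0...0> + |1...1>) / sqrt 2 on the sites X. *)
Definition ghz_supp X (al : cfg d X) := (al == res X cfg0) || (al == res X cfg1).
Definition ghz X (al be : cfg d X) : C := (ghz_supp al)%:R * (ghz_supp be)%:R / 2%:R.

Lemma ghz_diag X (al : cfg d X) : ghz al al = (ghz_supp al)%:R / 2%:R.
Proof. by rewrite /ghz; case: ghz_supp; rewrite ?mulr1 ?mulr0. Qed.

Lemma ghz_density X : X != set0 -> is_density (@ghz X).
Proof.
move=> /set0Pn [i Hi].
apply: (density_rank_one (w := fun al => (ghz_supp al)%:R) (k := 2%:R^-1)) => //.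
- by move=> al; rewrite conjC_nat.
- by rewrite invr_ge0 ler0n.
have supp2 : #|[pred al | @ghz_supp X al]| = 2%N.
  rewrite (eq_card (B := pred2 (res X cfg0) (res X cfg1))) // card2.
  suff -> : res X cfg0 != res X cfg1 by [].
  by apply/eqP => /agree_res/(_ i Hi); apply/eqP/cfg0_neq1.
rewrite (eq_bigr _ (fun al _ => ghz_diag al)) -mulr_suml -natr_sum.
have -> : (\sum_al @ghz_supp X al)%N = 2%N.
  rewrite -supp2 -sum1_card [RHS]big_mkcond.
  by apply: eq_bigr => al _; rewrite inE; case: ghz_supp.
by rewrite mulfV ?pnatr_eq0.
Qed.

Definition ghz_prod xi a b := \prod_(X in xi) ghz (res X a) (res X b).

Lemma ghz_prod_density xi : is_partition xi -> is_density (ghz_prod xi).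
Proof.
move=> Hxi.
apply: (density_rank_one (w := fun a => \prod_(X in xi) (ghz_supp (res X a))%:R)
          (k := \prod_(X in xi) 2%:R^-1)).
- by move=> a b; rewrite -!big_split.
- by move=> a; rewrite rmorph_prod; apply: eq_bigr => X _; apply: conjC_nat.
- by apply: prodr_ge0 => X _; rewrite invr_ge0 ler0n.
have /trivIsetP Hdisj := is_partition_trivIset Hxi.
rewrite (eq_bigl (zero_off (cover xi))) => [|a]; last first.
  by rewrite is_partition_cover // zero_offT.
rewrite /ghz_prod /cover -[X in zero_off X]big_enum; under eq_bigr => c _ do rewrite -big_enum.
rewrite sum_zero_off_prod ?enum_uniq //.
- rewrite big1_seq // => X; rewrite mem_enum => HX.
  rewrite (sum_zero_off_res (fun al => ghz al al)).
  by case: (ghz_density (is_partition_block_neq0 Hxi HX)) => _ [].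
- by move=> X Y; rewrite !mem_enum; apply: Hdisj.
- by move=> X a b Hab; rewrite (res_agree Hab).
Qed.

Lemma ghz_prod_unc xi : is_partition xi -> unc xi (ghz_prod xi).
Proof.
move=> Hxi; split; first exact: ghz_prod_density.
by exists (@ghz); split => // X HX; apply/ghz_density/(is_partition_block_neq0 Hxi).
Qed.

Lemma ghz_prod_diag_neq0 xi a :
  (forall X, X \in xi -> ghz_supp (res X a)) -> ghz_prod xi a a != 0.
Proof.
move=> Hsupp; apply/prodf_eq0 => -[X /Hsupp HX].
by rewrite ghz_diag HX mul1r invr_eq0 pnatr_eq0.
Qed.

Lemma ghz_prod_diag_eq0 xi a X :
  X \in xi -> ~~ ghz_supp (res X a) -> ghz_prod xi a a = 0.
Proof.
by move=> HX Hsupp; apply/eqP/prodf_eq0; exists X; rewrite // ghz_diag (negbTE Hsupp) mul0r.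
Qed.

(* The entanglement inside the blocks of xi is what is used: if a block X met two blocks
   of eta, then [splits_diag_swap] would trade the nonzero diagonal entries at [cfg0] and
   at the indicator of X for two entries one of which vanishes. *)
Lemma ghz_prod_refines xi eta :
  is_partition xi -> is_partition eta -> unc eta (ghz_prod xi) -> refines xi eta.
Proof.
move=> Hxi Heta Hunc; apply/forallP => X; apply/implyP => HX.
have /set0Pn [i Hi] := is_partition_block_neq0 Hxi HX.
have Hicov : i \in cover eta by rewrite is_partition_cover.
set Y := pblock eta i.
have HY : Y \in eta by rewrite pblock_mem.
have HiY : i \in Y by rewrite mem_pblock.
apply/existsP; exists Y; rewrite HY /=; apply/subsetP => j HjX; apply: contraT => HjY.
pose e := glue X cfg1 cfg0.
have nz0 : ghz_prod xi cfg0 cfg0 != 0.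
  by apply: ghz_prod_diag_neq0 => X' _; rewrite /ghz_supp eqxx.
have nze : ghz_prod xi e e != 0.
  apply: ghz_prod_diag_neq0 => X' HX'; apply/orP.
  have [<-|XX'] := eqVneq X X'; first by right; apply/eqP/res_agree/agree_glue_l.
  left; apply/eqP/res_agree => k Hk; rewrite glueE (disjointFr _ Hk) //.
  by apply: (trivIsetP (is_partition_trivIset Hxi)); rewrite // eq_sym.
have := splits_diag_swap cfg0 e (splits_of_unc Heta Hunc HY).
rewrite [X in _ = _ * X](ghz_prod_diag_eq0 (X := X)) ?mulr0 //; last first.
  rewrite negb_or; apply/andP; split; apply/eqP => /agree_res.
    by move/(_ i Hi)/eqP; rewrite !glueE HiY Hi eq_sym (negbTE (cfg0_neq1 i)).
  by move/(_ j HjX)/eqP; rewrite !glueE (negbTE HjY); apply/negP/cfg0_neq1.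
by move/eqP; rewrite mulf_eq0 (negbTE nz0) (negbTE nze).
Qed.

Definition finest_unc (rho : cfgL d -> cfgL d -> C) xi :=
  [/\ is_partition xi, unc xi rho &
      forall eta, is_partition eta -> unc eta rho -> refines xi eta].

Lemma finest_unc_exists rho : is_density rho -> exists xi, finest_unc rho xi.
Proof.
move=> Hrho; exists (atoms rho); split; first exact: atoms_partition.
  exact: unc_atoms.
exact: atoms_refines.
Qed.

Lemma ghz_prod_finest xi : is_partition xi -> finest_unc (ghz_prod xi) xi.
Proof.
move=> Hxi; split=> //; first exact: ghz_prod_unc.
by move=> eta; apply: ghz_prod_refines.
Qed.

End States.

Lemma setD_subset_iff (T : finType) (A B A' B' : {set T}) :
  (A :\: B \subset A' :\: B') = (A :&: B' \subset B) && (A \subset B :|: A').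
Proof.
apply/subsetP/andP => [H | [/subsetP H1 /subsetP H2] x].
  split; apply/subsetP => x; rewrite !inE.
    by case/andP=> HA HB'; apply: contraT => HB; move: (H x); rewrite !inE HA HB HB'; apply.
  by move=> HA; case HB: (x \in B) => //=; move: (H x); rewrite !inE HA HB => /(_ isT)/andP[].
rewrite !inE => /andP[HB HA]; move: (H2 x HA); rewrite inE (negbTE HB) /= => ->.
by rewrite andbT; apply: contra HB => HB'; apply: H1; rewrite inE HA.
Qed.

Section Filters.
Variable C : numClosedFieldType.
Variables (n : nat) (d : 'I_n -> nat).
Hypothesis hd : forall i, (1 < d i)%N.
Variable Q : {set {set {set {set 'I_n}}}}.
Hypothesis hQ : is_PIIstar Q.
Implicit Types (Xi Ups : {set {set {set {set 'I_n}}}}) (S : {set {set {set 'I_n}}})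
  (xi : {set {set 'I_n}}) (rho : cfgL d -> cfgL d -> C).

Lemma downset_of_Q S : S \in Q -> is_downset S.
Proof. by move=> HS; case/andP: hQ => _ /forallP /(_ S); rewrite HS. Qed.

Lemma partition_of_Q S xi : S \in Q -> xi \in S -> is_partition xi.
Proof. by move=> /downset_of_Q /and3P[/forallP H _ _] Hxi; move: (H xi); rewrite Hxi. Qed.

Lemma uncS_finest rho xi S : finest_unc rho xi -> S \in Q -> uncS S rho <-> xi \in S.
Proof.
move=> [Hxi Hunc Hmin] HS; split=> [[eta Heta Hunc_eta]|]; last by exists xi.
have /and3P[_ _ /forallP /(_ eta)] := downset_of_Q HS; rewrite Heta => /forallP /(_ xi).
by rewrite Hxi Hmin //= (partition_of_Q HS).
Qed.

Lemma Cunc_finest Xi rho xi : Xi \subset Q -> finest_unc rho xi ->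
  Cunc Q Xi rho <-> is_density rho /\ xi \in wedgeF Xi :\: veeCompl Q Xi.
Proof.
move=> /subsetP XiQ Hfin.
have XiCQ S : S \in Q :\: Xi -> S \in Q by case/setDP.
rewrite inE; split=> [[Hrho [Hout Hin]] | [Hrho /andP[Hvee Hwedge]]].
  split=> //; apply/andP; split.
    by apply/bigcupP => -[S HS /(uncS_finest Hfin (XiCQ S HS))]; apply: Hout.
  by apply/bigcapP => S HS; apply/(uncS_finest Hfin (XiQ S HS))/Hin.
split=> //; split=> S HS.
  by move/(uncS_finest Hfin (XiCQ S HS)) => HxiS; case/bigcupP: Hvee; exists S.
by apply/(uncS_finest Hfin (XiQ S HS)); move/bigcapP: Hwedge; apply.
Qed.

Lemma wedgeF_partition Xi xi : is_filter Q Xi -> xi \in wedgeF Xi -> is_partition xi.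
Proof.
case/and3P => /subsetP XiQ /set0Pn [S HS] _ /bigcapP /(_ S HS).
exact: partition_of_Q (XiQ S HS).
Qed.

Lemma Cunc_subset_iff Xi Ups : is_filter Q Xi -> is_filter Q Ups ->
  (forall rho, Cunc Q Xi rho -> Cunc Q Ups rho) <->
  wedgeF Xi :\: veeCompl Q Xi \subset wedgeF Ups :\: veeCompl Q Ups.
Proof.
move=> hXi hUps.
have [XiQ UpsQ] : Xi \subset Q /\ Ups \subset Q by case/and3P: hXi; case/and3P: hUps.
split=> [H | /subsetP H rho HXi].
  apply/subsetP => xi Hxi.
  have Hpart : is_partition xi by apply: wedgeF_partition hXi _; case/setDP: Hxi.
  have Hfin := ghz_prod_finest C hd Hpart.
  have Hrho := ghz_prod_density C hd Hpart.
  by have /(Cunc_finest UpsQ Hfin) [] := H _ ((Cunc_finest XiQ Hfin).2 (conj Hrho Hxi)).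
have [xi Hfin] := finest_unc_exists hd (proj1 HXi).
have [Hrho Hxi] := (Cunc_finest XiQ Hfin).1 HXi.
by apply/(Cunc_finest UpsQ Hfin); split=> //; apply: H.
Qed.

End Filters.

Theorem proposition2 (C : numClosedFieldType) (n : nat) (d : 'I_n -> nat)
  (hn : (1 <= n)%N) (hd : forall i, (1 < d i)%N)
  (Q : {set {set {set {set 'I_n}}}}) (hQ : is_PIIstar Q)
  (Xi Ups : {set {set {set {set 'I_n}}}})
  (hXi : is_filter Q Xi) (hUps : is_filter Q Ups) :
  (forall rho : cfgL d -> cfgL d -> C, Cunc Q Xi rho <-> Cunc Q Ups rho) <->
  [/\ (wedgeF Xi :&: veeCompl Q Ups)%SET \subset veeCompl Q Xi,
      wedgeF Xi \subset (veeCompl Q Xi :|: wedgeF Ups)%SET,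
      (wedgeF Ups :&: veeCompl Q Xi)%SET \subset veeCompl Q Ups &
      wedgeF Ups \subset (veeCompl Q Ups :|: wedgeF Xi)%SET].
Proof.
have XiUps := Cunc_subset_iff C hd hQ hXi hUps.
have UpsXi := Cunc_subset_iff C hd hQ hUps hXi.
rewrite setD_subset_iff in XiUps; rewrite setD_subset_iff in UpsXi.
split=> [H | [h1 h2 h3 h4] rho].
  have /XiUps /andP[h1 h2] : forall rho : cfgL d -> cfgL d -> C,
      Cunc Q Xi rho -> Cunc Q Ups rho by move=> rho /(H rho).
  by have /UpsXi /andP[h3 h4] : forall rho : cfgL d -> cfgL d -> C,
      Cunc Q Ups rho -> Cunc Q Xi rho by move=> rho /(H rho).
by split; [apply: (proj2 XiUps); rewrite h1 h2 | apply: (proj2 UpsXi); rewrite h3 h4].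
Qed.
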